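(* Let $H$ be a real Hilbert space, $\mathcal{I}$ a finite index set, $J,g_i:H\to\mathbb{R}$ ($i\in\mathcal{I}$) $\mathcal{C}^1$ functions, $\Omega=\{u\in H: g_i(u)\le 0\ \forall i\in\mathcal{I}\}$, and assume that for every $u\in\Omega$ with $I_A(u)\ne\emptyset$ the vectors $\{g_i'(u): i\in I_A(u)\}$ are linearly independent. Let $u\in\Omega$ and let $d\in H$ satisfy $\langle d, g_i'(u)\rangle=0$ for all $i\in I_W(u)$. Write the orthogonal decomposition $-J'(u)=d(u)+w$ with $d(u)\in\operatorname{span}\{d\}$ and $w\in d^\perp=\{v\in H:\langle v,d\rangle=0\}$. Then $$\langle J'(u), d_W(u)\rangle\le\langle J'(u), d(u)\rangle\le 0\quad\text{and}\quad \|d(u)\|\le\|d_W(u)\|,$$ where equality holds in the first inequality, or in the third inequality $\|d(u)\|\le\|d_W(u)\|$, if and only if $d(u)=d_W(u)$, and equality holds in the second inequality if and only if $d(u)=0$.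
   Context: $J'(u)$, $g_i'(u)$ denote gradients in $H$; $\mathbb{P}_C$ is the metric projection onto a closed convex set $C$. For $u\in\Omega$: $I_A(u)=\{i\in\mathcal{I}: g_i(u)=0\}$; $C_A(u)=\{\sum_{i\in I_A(u)}a_ig_i'(u): a_i\ge0\}$ ($=\{0\}$ if empty); $d_A(u)=-J'(u)-\mathbb{P}_{C_A(u)}(-J'(u))$; $I_W(u)=\{i\in I_A(u): \langle g_i'(u), d_A(u)\rangle=0\}$; $C_W(u)=\{\sum_{i\in I_W(u)}a_ig_i'(u): a_i\ge 0\}$ ($=\{0\}$ if empty); $d_W(u)=-J'(u)-\mathbb{P}_{C_W(u)}(-J'(u))$. *)

From HB Require Import structures.
From mathcomp Require Import all_boot all_order all_algebra.
From mathcomp Require Import all_classical all_reals all_analysis.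
Set Implicit Arguments. Unset Strict Implicit. Unset Printing Implicit Defensive.
Import Order.TTheory GRing.Theory Num.Theory.
Import numFieldNormedType.Exports.
Local Open Scope classical_set_scope.
Local Open Scope ring_scope.

(* A real Hilbert space is a complete normed space H whose norm comes from
   an inner product ip : H -> H -> R. *)
Record is_inner_product (R : realType) (H : normedModType R)
    (ip : H -> H -> R) : Prop := {
  ip_sym : forall x y, ip x y = ip y x;
  ip_addl : forall x y z, ip (x + y) z = ip x z + ip y z;
  ip_scalel : forall (a : R) x y, ip (a *: x) y = a * ip x y;
  ip_norm : forall x, ip x x = `|x| ^+ 2 }.

(* g : H -> R is C^1 with gradient g' (Riesz representative of the Frechet
   derivative w.r.t. ip) *)
Definition C1_with_gradient (R : realType) (H : normedModType R)
    (ip : H -> H -> R) (g : H -> R) (g' : H -> H) : Prop :=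
  (forall u, differentiable g u /\ forall v, 'd g u v = ip (g' u) v)
  /\ continuous g'.

(* metric projection onto C (C will be a closed convex nonempty set, so the
   minimizer exists and is unique) *)
Definition proj (R : realType) (H : normedModType R) (C : set H) (x : H) : H :=
  xget 0 [set p | C p /\ forall q, C q -> `|x - p| <= `|x - q|].

Definition cone (R : realType) (H : normedModType R) (I : finType)
    (S : {set I}) (v : I -> H) : set H :=
  [set x | exists a : I -> R, (forall i, 0 <= a i) /\ x = \sum_(i in S) a i *: v i].

Section Active.
Variables (R : realType) (H : normedModType R) (I : finType).
Variables (ip : H -> H -> R) (J : H -> R) (J' : H -> H)
          (g : I -> H -> R) (g' : I -> H -> H).

Definition Omega : set H := [set u | forall i, g i u <= 0].
Definition I_A (u : H) : {set I} := [set i | g i u == 0].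
Definition C_A (u : H) : set H := cone (I_A u) (fun i => g' i u).
Definition d_A (u : H) : H := - J' u - proj (C_A u) (- J' u).
Definition I_W (u : H) : {set I} := [set i in I_A u | ip (g' i u) (d_A u) == 0].
Definition C_W (u : H) : set H := cone (I_W u) (fun i => g' i u).
Definition d_W (u : H) : H := - J' u - proj (C_W u) (- J' u).
End Active.

From Pilot Require Import Defs.
From HB Require Import structures.
From mathcomp Require Import all_boot all_order all_algebra.
From mathcomp Require Import all_classical all_reals all_analysis.
From mathcomp Require Import ring lra.
Set Implicit Arguments. Unset Strict Implicit. Unset Printing Implicit Defensive.
Import Order.TTheory GRing.Theory Num.Theory.
Import numFieldNormedType.Exports.
Local Open Scope classical_set_scope.
Local Open Scope ring_scope.

(* Let p be the projection of -J'(u) onto the cone C_W(u), so d_W(u) = -J'(u) - p.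
   Since C_W(u) is a cone, p is orthogonal to d_W(u); since d is orthogonal to the
   generators of C_W(u), p is orthogonal to d and hence to d(u).  Thus
   d_W(u) = d(u) + (w - p) is an orthogonal decomposition, giving
   |d_W(u)|^2 = |d(u)|^2 + |w - p|^2, while <J'(u), d_W(u)> = -|d_W(u)|^2 and
   <J'(u), d(u)> = -|d(u)|^2; every claim compares these squares, with equality
   exactly when w - p = 0. *)

Section Cone.
Variables (R : realType) (H : normedModType R) (I : finType).
Variables (S : {set I}) (v : I -> H).

Lemma cone0 : cone S v 0.
Proof. by exists (fun=> 0); split=> //; rewrite big1 // => i _; rewrite scale0r. Qed.

Lemma cone_scale (s : R) x : 0 <= s -> cone S v x -> cone S v (s *: x).
Proof.
move=> s0 [a [a0 ->]]; exists (fun i => s * a i); split.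
  by move=> i; rewrite mulr_ge0.
by rewrite scaler_sumr; apply: eq_bigr => i _; rewrite scalerA.
Qed.

End Cone.

Section InnerProduct.
Variables (R : realType) (H : normedModType R) (ip : H -> H -> R).
Hypothesis hip : is_inner_product ip.

Lemma ip0l y : ip 0 y = 0.
Proof. by rewrite -(scale0r (0 : H)) (ip_scalel hip) mul0r. Qed.

Lemma ip0r x : ip x 0 = 0.
Proof. by rewrite (ip_sym hip) ip0l. Qed.

Lemma ipNl x y : ip (- x) y = - ip x y.
Proof. by rewrite -scaleN1r (ip_scalel hip) mulN1r. Qed.

Lemma ipDr x y z : ip x (y + z) = ip x y + ip x z.
Proof. by rewrite !(ip_sym hip x) (ip_addl hip). Qed.

Lemma ipBr x y z : ip x (y - z) = ip x y - ip x z.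
Proof. by rewrite ipDr !(ip_sym hip x) ipNl. Qed.

Lemma ipZr a x y : ip x (a *: y) = a * ip x y.
Proof. by rewrite !(ip_sym hip x) (ip_scalel hip). Qed.

Lemma ip_suml (I : finType) (S : {set I}) (F : I -> H) y :
  ip (\sum_(i in S) F i) y = \sum_(i in S) ip (F i) y.
Proof.
apply: (big_rec2 (fun a b => ip a y = b)); first exact: ip0l.
by move=> i a b _ <-; rewrite (ip_addl hip).
Qed.

Lemma normD_sqr_orth x y : ip x y = 0 -> `|x + y| ^+ 2 = `|x| ^+ 2 + `|y| ^+ 2.
Proof.
move=> xy; rewrite -!(ip_norm hip) (ip_addl hip) !ipDr xy (ip_sym hip y) xy.
by rewrite addr0 add0r.
Qed.

Lemma ip_oppD_orth x y : ip x y = 0 -> ip (- (x + y)) x = - `|x| ^+ 2.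
Proof. by move=> xy; rewrite ipNl (ip_addl hip) (ip_sym hip y) xy addr0 (ip_norm hip). Qed.

Lemma cone_perp (I : finType) (S : {set I}) (v : I -> H) (d x : H) :
  (forall i, i \in S -> ip d (v i) = 0) -> cone S v x -> ip x d = 0.
Proof.
move=> dS [a [_ ->]]; rewrite ip_suml big1 // => i iS.
by rewrite (ip_scalel hip) (ip_sym hip) dS // mulr0.
Qed.

Lemma eq0_of_quadratic_ge0 (c n : R) :
  0 <= n -> (forall s, s <= 1 -> 0 <= 2 * s * c + s ^+ 2 * n) -> c = 0.
Proof.
move=> n0 hq; have c0 := normr_ge0 c; set K := n + `|c| + 1.
have K0 : 0 < K by rewrite /K; lra.
have s1 : - c / K <= 1.
  by rewrite ler_pdivrMr // mul1r /K; have := ler_norm (- c); rewrite normrN; lra.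
(* the instance s = -c/K, multiplied by K^2, reads 0 <= c^2 (n - 2K), and n < 2K *)
have : 0 <= (2 * (- c / K) * c + (- c / K) ^+ 2 * n) * K ^+ 2.
  by rewrite mulr_ge0 ?sqr_ge0 ?hq.
have -> : (2 * (- c / K) * c + (- c / K) ^+ 2 * n) * K ^+ 2 = c ^+ 2 * (n - 2 * K).
  by field; rewrite gt_eqF.
move=> h; apply/eqP; rewrite -sqrf_eq0 eq_le sqr_ge0 andbT.
have : n - 2 * K < 0 by rewrite /K; lra.
nra.
Qed.

Lemma proj_cone_orth (C : set H) x :
  (forall s y, 0 <= s -> C y -> C (s *: y)) ->
  ip (x - Defs.proj C x) (Defs.proj C x) = 0.
Proof.
move=> Cscale; rewrite /Defs.proj; case: xgetP => [p _ [Cp pmin] | _]; last first.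
  exact: ip0r.
set e := x - p; apply: (@eq0_of_quadratic_ge0 _ (ip p p)).
  by rewrite (ip_norm hip) sqr_ge0.
move=> s s1; have := pmin _ (Cscale (1 - s) p _ Cp); rewrite subr_ge0 => /(_ s1).
have -> : x - (1 - s) *: p = e + s *: p.
  by rewrite /e scalerBl scale1r opprB addrA addrAC.
rewrite -/e; clearbody e.
rewrite -(ler_pXn2r (n := 2)) ?nnegrE // -!(ip_norm hip).
rewrite (ip_addl hip) !ipDr !(ip_scalel hip) !ipZr (ip_sym hip p e).
lra.
Qed.

Lemma proj_mem (C : set H) x : C 0 -> C (Defs.proj C x).
Proof. by move=> C0; rewrite /Defs.proj; case: xgetP => [p _ []|]. Qed.

End InnerProduct.

Theorem lemma7 (R : realType) (H : completeNormedModType R) (I : finType)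
    (ip : H -> H -> R) (J : H -> R) (J' : H -> H)
    (g : I -> H -> R) (g' : I -> H -> H) :
  is_inner_product ip ->
  C1_with_gradient ip J J' ->
  (forall i, C1_with_gradient ip (g i) (g' i)) ->
  (forall u, Omega g u -> (0 < #|I_A g u|)%N ->
     forall a : I -> R, \sum_(i in I_A g u) a i *: g' i u = 0 ->
       forall i, i \in I_A g u -> a i = 0) ->
  forall (u d : H), Omega g u ->
  (forall i, i \in I_W ip J' g g' u -> ip d (g' i u) = 0) ->
  forall du w : H, (exists t : R, du = t *: d) -> ip w d = 0 ->
  - J' u = du + w ->
  (ip (J' u) (d_W ip J' g g' u) <= ip (J' u) du) /\
  (ip (J' u) du <= 0) /\
  (`|du| <= `|d_W ip J' g g' u|) /\
  (ip (J' u) (d_W ip J' g g' u) = ip (J' u) du <-> du = d_W ip J' g g' u) /\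
  (`|du| = `|d_W ip J' g g' u| <-> du = d_W ip J' g g' u) /\
  (ip (J' u) du = 0 <-> du = 0).
Proof.
move=> hip _ _ _ u d _ d_perp du w [t duE] wd Ju.
rewrite /d_W /C_W; set p := Defs.proj _ _; set dW := - J' u - p.
have pd : ip p d = 0 := cone_perp hip d_perp (proj_mem _ (cone0 _ _)).
have dWp : ip dW p = 0 := proj_cone_orth hip _ (@cone_scale _ _ _ _ _).
have du_perp : ip du (w - p) = 0.
  by rewrite duE (ip_scalel hip) (ipBr hip) !(ip_sym hip d) wd pd subrr mulr0.
have dWE : dW = du + (w - p) by rewrite /dW Ju addrA.
have pythagoras := normD_sqr_orth hip du_perp; rewrite -dWE in pythagoras.
have JdW : ip (J' u) dW = - `|dW| ^+ 2.
  by rewrite -[J' u]opprK -[- J' u](subrK p) -/dW (ip_oppD_orth hip).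
have Jdu : ip (J' u) du = - `|du| ^+ 2.
  by rewrite -[J' u]opprK Ju (ip_oppD_orth hip) // duE (ip_scalel hip) (ip_sym hip) wd mulr0.
have dW_du : du = dW <-> `|w - p| = 0.
  have -> : w - p = dW - du by rewrite dWE addrAC subrr add0r.
  by split=> [->|/eqP]; rewrite ?subrr ?normr0 // normr_eq0 subr_eq0 => /eqP.
rewrite JdW Jdu.
have := normr_ge0 du; have := normr_ge0 dW; have := normr_ge0 (w - p) => ? ? ?.
split; first nra. split; first nra. split; first nra.
split; first by split=> [?|->] //; apply/dW_du; nra.
split; first by split=> [?|->] //; apply/dW_du; nra.
split=> [/eqP|->]; last by rewrite normr0 expr0n oppr0.
by rewrite oppr_eq0 sqrf_eq0 normr_eq0 => /eqP.
Qed.
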